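(* Let $G$ be a connected graph with $n$ vertices and matching number $k$, where $2\le k<\lfloor n/2\rfloor$. Then $\sigma_0(G)\ge 2-\frac kn$ and $\sigma_1(G)\ge 4n-3k$. In each bound, equality holds if and only if $G=K_k\vee\overline{K}_{n-k}$.
   Context: All graphs are finite, simple, undirected. For a connected graph $G$ and $u\in V(G)$, $\varepsilon_G(u)=\max_v d_G(u,v)$; $\sigma_0(G)=\frac1{|V(G)|}\sum_u\varepsilon_G(u)$, $\sigma_1(G)=\sum_u\varepsilon_G(u)^2$. The matching number is the maximum number of pairwise disjoint edges. $K_r$ is the complete graph, $\overline{K}_r$ the edgeless graph on $r$ vertices, and $G\vee H$ (the join) is obtained from the disjoint union of $G$ and $H$ by adding all edges between $V(G)$ and $V(H)$. *)

From mathcomp Require Import all_boot all_order all_algebra.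
Set Implicit Arguments. Unset Strict Implicit. Unset Printing Implicit Defensive.
Import Order.TTheory GRing.Theory Num.Theory.

Section Graphs.
Variable T : finType.
Variable e : rel T.

Definition simple_graph := symmetric e /\ irreflexive e.

Definition connected_graph := forall x y : T, connect e x y.

Fixpoint nball (m : nat) (x : T) : {set T} :=
  match m with
  | 0 => [set x]
  | m'.+1 => nball m' x :|: [set z | [exists y in nball m' x, e y z]]
  end.

(* graph distance: least m with y within m steps of x (searched over 0..#|T|;
   always found for connected graphs) *)
Definition dist (x y : T) : nat :=
  find (fun m => y \in nball m x) (iota 0 #|T|.+1).

Definition ecc (u : T) : nat := \max_(v : T) dist u v.

Definition sigma0 : rat := ((\sum_(u : T) ecc u)%:R / #|T|%:R)%R.

Definition sigma1 : nat := \sum_(u : T) (ecc u) ^ 2.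

Definition is_matching (M : {set {set T}}) : bool :=
  [forall A in M, exists x, exists y, e x y && (A == [set x; y])] && trivIset M.

Definition matching_number : nat :=
  \max_(M : {set {set T}} | is_matching M) #|M|.

End Graphs.

Definition complete_rel (A : finType) : rel A := fun x y => x != y.
Definition empty_rel (A : finType) : rel A := fun _ _ => false.

Definition join_rel (A B : finType) (eA : rel A) (eB : rel B) : rel (A + B)%type :=
  fun u v => match u, v with
             | inl a, inl a' => eA a a'
             | inr b, inr b' => eB b b'
             | _, _ => true
             end.

Definition KjoinEmpty (k n : nat) : rel ('I_k + 'I_(n - k))%type :=
  join_rel (@complete_rel 'I_k) (@empty_rel 'I_(n - k)).

Arguments KjoinEmpty k n : clear implicits.

Definition isomorphic (T U : finType) (e : rel T) (f : rel U) : Prop :=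
  exists g : T -> U, bijective g /\ forall x y, e x y = f (g x) (g y).

From mathcomp Require Import all_boot all_order all_algebra.
From mathcomp Require Import zify ring.
Import Order.TTheory GRing.Theory Num.Theory.
Set Implicit Arguments. Unset Strict Implicit. Unset Printing Implicit Defensive.

(* Let U be the set of universal vertices (adjacent to every other vertex)
   and t = |U|.  A universal vertex has eccentricity >= 1 and any other
   vertex has eccentricity >= 2, with equality throughout as soon as U is
   nonempty (any two vertices are then at distance <= 2).  Hence
   sum_u ecc(u)^p >= t + 2^p (n - t) for every p, with equality when t > 0.
   Since n >= 2k + 2, universal vertices can be greedily matched to distinct
   other vertices, which gives t <= k; this yields both bounds (p = 1, 2).
   Equality forces t = k; in that case an edge between two non-universal
   vertices would again extend to a matching of size k + 1, so the
   non-universal vertices are independent and G = K_k \/ co-K_(n-k).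
   Conversely that graph has k universal vertices. *)

Section Distance.
Variables (T : finType) (e : rel T).

Lemma dist_le (u v : T) i : i <= #|T| -> v \in nball e i u -> dist e u v <= i.
Proof.
move=> le_iT vi; rewrite leqNgt; apply/negP => lt_i_dist.
by have := before_find 0 lt_i_dist; rewrite nth_iota ?ltnS //= vi.
Qed.

Lemma mem_nball_dist (u v : T) :
  dist e u v <= #|T| -> v \in nball e (dist e u v) u.
Proof.
move=> le_dist; have found : has (fun m => v \in nball e m u) (iota 0 #|T|.+1).
  by rewrite has_find size_iota ltnS.
by have := nth_find 0 found; rewrite nth_iota // ltnS.
Qed.

Lemma nball1E (u v : T) : (v \in nball e 1 u) = (v == u) || e u v.
Proof.
rewrite /= !inE; congr (_ || _); apply/existsP/idP => [[y]|uv].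
  by rewrite inE => /andP[/eqP ->].
by exists u; rewrite inE eqxx.
Qed.

Lemma dist_le1 (u v : T) : (dist e u v <= 1) = (v == u) || e u v.
Proof.
have T_gt0 : 0 < #|T| by apply/card_gt0P; exists u.
apply/idP/idP => [le_dist1|]; last by rewrite -nball1E; apply: dist_le.
have := mem_nball_dist (leq_trans le_dist1 T_gt0).
case: (dist e u v) le_dist1 => [|[|]] // _; last by rewrite nball1E.
by rewrite inE => ->.
Qed.

Lemma dist_gt0 (u v : T) : v != u -> 0 < dist e u v.
Proof.
apply: contraR; rewrite -eqn0Ngt => /eqP dist0.
by have := @mem_nball_dist u v; rewrite dist0 inE => /(_ isT).
Qed.

Lemma dist_gt1 (u v : T) : v != u -> ~~ e u v -> 1 < dist e u v.
Proof. by move=> vu not_uv; rewrite ltnNge dist_le1 negb_or vu. Qed.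

Lemma dist_le2 (u w v : T) : 1 < #|T| -> e u w -> e w v -> dist e u v <= 2.
Proof.
move=> T_gt1 uw wv; apply: dist_le => //; rewrite [nball e 2 u]/= inE.
by apply/orP; right; rewrite inE; apply/existsP; exists w; rewrite nball1E uw orbT.
Qed.

End Distance.

Section Eccentricity.
Variables (T : finType) (e : rel T).

Definition universal : {set T} := [set u | [forall v, (v != u) ==> e u v]].

Lemma universalP (u : T) :
  reflect (forall v, v != u -> e u v) (u \in universal).
Proof. by rewrite inE; apply: (iffP forall_inP). Qed.

Definition ecc_lb (u : T) : nat := if u \in universal then 1 else 2.

Lemma ecc_lb_le (u : T) : 1 < #|T| -> ecc_lb u <= ecc e u.
Proof.
move=> T_gt1; rewrite /ecc_lb; case: ifPn => [_ | not_univ].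
  have /card_gt0P[v] : 0 < #|[set~ u]| by rewrite cardsC1 -subn1 subn_gt0.
  by rewrite !inE => vu; apply: leq_trans (dist_gt0 e vu) (leq_bigmax v).
have [v vu not_uv] : exists2 v, v != u & ~~ e u v.
  move: not_univ; rewrite inE negb_forall => /existsP[v].
  by rewrite negb_imply => /andP[vu not_uv]; exists v.
by apply: leq_trans (dist_gt1 vu not_uv) (leq_bigmax v).
Qed.

Lemma eccE (u : T) : symmetric e -> 1 < #|T| -> universal != set0 ->
  ecc e u = ecc_lb u.
Proof.
move=> e_sym T_gt1 /set0Pn[w /universalP w_univ].
apply/eqP; rewrite eqn_leq ecc_lb_le // andbT; apply/bigmax_leqP => v _.
rewrite /ecc_lb; case: ifPn => [/universalP u_univ | u_not_univ].
  by rewrite dist_le1; case: eqVneq => //= /u_univ.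
have [near | far] := boolP ((v == u) || e u v).
  by rewrite ltnW // ltnS dist_le1.
have wu : w != u by apply: contraNneq u_not_univ => <-; exact/universalP.
have uw : e u w by rewrite e_sym w_univ // eq_sym.
have vw : v != w by apply: contraNneq far => ->; rewrite uw orbT.
exact: dist_le2 T_gt1 uw (w_univ v vw).
Qed.

Lemma sum_ecc_lb_pow (p : nat) :
  \sum_(u : T) ecc_lb u ^ p = #|universal| + (#|T| - #|universal|) * 2 ^ p.
Proof.
rewrite (bigID (mem universal)) /=.
rewrite (eq_bigr (fun=> 1)) => [|u u_univ]; last by rewrite /ecc_lb u_univ exp1n.
rewrite [X in _ + X](eq_bigr (fun=> 2 ^ p)) => [|u /negbTE u_nu].
  rewrite !sum_nat_const muln1 -(cardC universal) addKn.
  by congr (_ + _ * _); apply: eq_card.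
by rewrite /ecc_lb u_nu.
Qed.

(* Lower bound on sum_u ecc(u)^p; p = 1 gives n sigma0 and p = 2 gives sigma1. *)
Lemma sum_ecc_pow_ge (p : nat) : 1 < #|T| ->
  #|universal| + (#|T| - #|universal|) * 2 ^ p <= \sum_(u : T) ecc e u ^ p.
Proof.
move=> T_gt1; rewrite -sum_ecc_lb_pow; apply: leq_sum => u _.
by case: p => [|p]; rewrite ?expn0 ?leq_exp2r ?ecc_lb_le.
Qed.

Lemma sum_ecc_pow_eq (p : nat) : symmetric e -> 1 < #|T| -> universal != set0 ->
  \sum_(u : T) ecc e u ^ p = #|universal| + (#|T| - #|universal|) * 2 ^ p.
Proof.
move=> e_sym T_gt1 univ_n0; rewrite -sum_ecc_lb_pow.
by apply: eq_bigr => u _; rewrite eccE.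
Qed.

End Eccentricity.

Lemma exists_subset_card (T : finType) (U : {set T}) (m : nat) :
  m <= #|U| -> exists2 A : {set T}, A \subset U & #|A| = m.
Proof.
move=> le_mU; exists [set x in take m (enum U)].
  by apply/subsetP => x; rewrite inE => /mem_take; rewrite mem_enum.
rewrite cardsE (card_uniqP _) ?take_uniq ?enum_uniq // size_take -cardE.
by case: ltngtP le_mU.
Qed.

Section Matchings.
Variables (T : finType) (e : rel T).

Lemma matching_le (M : {set {set T}}) :
  is_matching e M -> #|M| <= matching_number e.
Proof. by move=> M_match; apply: (leq_bigmax_cond (P := is_matching e)). Qed.

Lemma matching_set0 : is_matching e set0.
Proof.
apply/andP; split; first by apply/forall_inP => X; rewrite inE.
by apply/trivIsetP => X Y; rewrite inE.
Qed.

Lemma set0_notin_matching (M : {set {set T}}) : is_matching e M -> set0 \notin M.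
Proof.
case/andP => /forall_inP edges _; apply/negP => /edges /existsP[x /existsP[y]].
by case/andP=> _ /eqP set0E; have := set21 x y; rewrite -set0E inE.
Qed.

Lemma matching_add (M : {set {set T}}) (a b : T) :
  is_matching e M -> e a b -> a \notin cover M -> b \notin cover M ->
  is_matching e ([set a; b] |: M) /\ #|[set a; b] |: M| = #|M|.+1.
Proof.
move=> M_match ab a_free b_free; case/andP: (M_match) => edges M_triv.
have ab_disj : {in M, forall Y : {set T}, [disjoint [set a; b] & Y]}.
  move=> Y YM; rewrite disjoints_subset; apply/subsetP => x; rewrite !inE.
  case/orP=> /eqP ->; [apply: contraNN a_free | apply: contraNN b_free];
    by move=> xY; apply/bigcupP; exists Y.
have [trivU abM] := trivIsetU1 ab_disj M_triv (set0_notin_matching M_match).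
split; last by rewrite cardsU1 abM.
apply/andP; split => //; apply/forall_inP => Y /setU1P[->|/(forall_inP edges)//].
by apply/existsP; exists a; apply/existsP; exists b; rewrite ab eqxx.
Qed.

(* Greedy extension: the universal vertices of A can be matched to distinct
   vertices of a disjoint set B with |B| >= |A|, all uncovered by M. *)
Lemma matching_extend_universal (A B : {set T}) (M : {set {set T}}) :
  is_matching e M -> A \subset universal e -> #|A| <= #|B| -> [disjoint A & B] ->
  [disjoint cover M & A :|: B] -> #|M| + #|A| <= matching_number e.
Proof.
move cardA : #|A| => m; elim: m A B M cardA => [|m IH] A B M cardA M_match.
  by rewrite addn0 => *; apply: matching_le.
move=> A_univ le_AB AB_disj M_disj.
have [a aA] : exists a, a \in A by apply/card_gt0P; rewrite cardA.
have [b bB] : exists b, b \in B by apply/card_gt0P; apply: leq_trans le_AB.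
have ba : b != a by apply: contraTneq bB => ->; rewrite (disjointFr AB_disj).
have ab : e a b by move/subsetP: A_univ => /(_ a aA)/universalP; apply.
have free x : x \in A :|: B -> x \notin cover M.
  by move=> xAB; rewrite (disjointFl M_disj).
have a_free : a \notin cover M by apply: free; rewrite inE aA.
have b_free : b \notin cover M by apply: free; rewrite inE bB orbT.
have [M'_match cardM'] := matching_add M_match ab a_free b_free.
rewrite -addSnnS -cardM'.
apply: (IH (A :\ a) (B :\ b) _ _ M'_match (subset_trans (subD1set A a) A_univ)).
- by move: cardA; rewrite (cardsD1 a) aA => -[].
- by move: le_AB; rewrite (cardsD1 b) bB.
- exact: disjointW (subD1set A a) (subD1set B b) AB_disj.
rewrite disjoints_subset; apply/subsetP => x /bigcupP[Y /setU1P[->|YM] xY].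
  move: xY; rewrite !inE => /orP[]/eqP->; rewrite eqxx /=.
    by rewrite (disjointFr AB_disj aA) andbF.
  by move: AB_disj; rewrite disjoint_sym => /disjointFr/(_ bB)->; rewrite andbF.
have /negbT : x \in A :|: B = false by apply/(disjointFr M_disj)/bigcupP; exists Y.
by rewrite !inE negb_or => /andP[/negbTE-> /negbTE->]; rewrite !andbF.
Qed.

Lemma universal_card_le :
  (matching_number e).*2.+2 <= #|T| -> #|universal e| <= matching_number e.
Proof.
move=> big_T; rewrite leqNgt; apply/negP => /exists_subset_card[A A_univ cardA].
have le_AC : #|A| <= #|~: A| by move: big_T; rewrite -(cardsC A) cardA; lia.
have disj_AC : [disjoint A & ~: A] by rewrite disjoints_subset setCK.
have disj_cover0 : [disjoint cover set0 & A :|: ~: A].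
  by rewrite /cover big_set0 disjoints_subset sub0set.
have := matching_extend_universal matching_set0 A_univ le_AC disj_AC disj_cover0.
by rewrite cards0 cardA ltnn.
Qed.

(* With n >= 2k + 2 and exactly k universal vertices, the remaining vertices
   are pairwise non-adjacent: an edge among them would give k + 1 disjoint edges. *)
Lemma nonuniversal_independent :
  (matching_number e).*2.+2 <= #|T| -> #|universal e| = matching_number e ->
  {in ~: universal e &, forall x y, ~~ e x y}.
Proof.
move=> big_T card_univ x y; rewrite !in_setC => x_nu y_nu; apply/negP => xy.
have no_cover0 z : z \notin cover (set0 : {set {set T}}) by rewrite /cover big_set0 inE.
have [] := matching_add matching_set0 xy (no_cover0 x) (no_cover0 y).
rewrite setU0 cards1 => M_match _.
set B := ~: (universal e :|: [set x; y]).
have le_UB : #|universal e| <= #|B|.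
  have le_Uxy : #|universal e :|: [set x; y]| <= #|universal e| + 2.
    by apply: leq_trans (leq_card_setU _ _) _; rewrite leq_add2l cards2; case: (x != y).
  by move: big_T le_Uxy; rewrite -(cardsC (universal e :|: [set x; y])) -/B card_univ; lia.
have disj_UB : [disjoint universal e & B] by rewrite disjoints_subset setCK subsetUl.
have disj_cover : [disjoint cover [set [set x; y]] & universal e :|: B].
  rewrite cover1 disjoints_subset; apply/subsetP => z.
  rewrite in_set2 in_setC !in_setU in_setC in_setU in_set2.
  by case/orP => /eqP->; rewrite eqxx ?orbT ?(negbTE x_nu) ?(negbTE y_nu).
have := matching_extend_universal M_match (subxx _) le_UB disj_UB disj_cover.
by rewrite cards1 card_univ ltnn.
Qed.

End Matchings.

Section Extremal.
Variables (T : finType) (e : rel T).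

(* K_k \/ co-K_(n-k) has k universal vertices, so any graph isomorphic to it
   has at least k. *)
Lemma iso_universal_card (k n : nat) :
  isomorphic e (KjoinEmpty k n) -> k <= #|universal e|.
Proof.
case=> g [[h gK hK] e_g].
have h_inj : injective (fun a : 'I_k => h (inl a)).
  by move=> a b /(congr1 g); rewrite !hK => -[].
rewrite -[k]card_ord -(card_imset _ h_inj); apply/subset_leq_card/subsetP.
move=> _ /imsetP[a _ ->]; apply/universalP => v va; rewrite e_g hK.
case gv: (g v) => [a'|//]; apply: contraNneq va => aa'.
by rewrite -[v]gK gv -aa'.
Qed.

Lemma iso_of_universal : simple_graph e -> 0 < #|universal e| < #|T| ->
  {in ~: universal e &, forall x y, ~~ e x y} ->
  isomorphic e (KjoinEmpty #|universal e| #|T|).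
Proof.
case=> e_sym e_irr /andP[univ_gt0 univ_ltT] indep.
have cardC : #|~: universal e| = #|T| - #|universal e| by rewrite cardsCs setCK.
have [x0 x0U] : exists x0, x0 \in universal e by apply/card_gt0P.
have [x1 x1C] : exists x1, x1 \in ~: universal e by apply/card_gt0P; rewrite cardC subn_gt0.
pose g x : 'I_#|universal e| + 'I_(#|T| - #|universal e|) :=
  if x \in universal e then inl (enum_rank_in x0U x)
  else inr (cast_ord cardC (enum_rank_in x1C x)).
pose h (y : 'I_#|universal e| + 'I_(#|T| - #|universal e|)) : T := match y with
  | inl a => enum_val a | inr b => enum_val (cast_ord (esym cardC) b) end.
exists g; split.
  exists h => [x | [a | b]]; rewrite /g /h /=.
  - case: ifPn => xU; first by rewrite enum_rankK_in.
    by rewrite cast_ordK enum_rankK_in // inE.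
  - by rewrite enum_valP enum_valK_in.
  - have := enum_valP (cast_ord (esym cardC) b); rewrite inE => /negbTE->.
    by rewrite enum_valK_in cast_ordKV.
have univ_adj x y : x \in universal e -> y \notin universal e -> e x y.
  by move=> xU yU; apply: (elimT (universalP e x) xU); apply: contraNneq yU => ->.
move=> x y; rewrite /g; case: ifPn => xU; case: ifPn => yU /=.
- rewrite /complete_rel (inj_in_eq (@enum_rank_in_inj _ x0 x0 _ x0U x0U)) //.
  case: eqVneq => [->|xy]; first exact: e_irr.
  by apply: (elimT (universalP e x) xU); rewrite eq_sym.
- exact: univ_adj.
- by rewrite e_sym univ_adj.
- by apply/negbTE/indep; rewrite inE.
Qed.

End Extremal.

Lemma extremal_iff (T : finType) (e : rel T) : simple_graph e ->
  (matching_number e).*2.+2 <= #|T| -> 0 < matching_number e ->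
  isomorphic e (KjoinEmpty (matching_number e) #|T|) <->
  #|universal e| = matching_number e.
Proof.
move=> e_simple big_T k_gt0; split => [iso | card_univ].
  by apply/eqP; rewrite eqn_leq universal_card_le // (iso_universal_card iso).
rewrite -card_univ; apply: iso_of_universal => //.
  rewrite card_univ k_gt0 /=; apply: leq_trans big_T.
  by rewrite ltnS leqW // -addnn leq_addr.
exact: nonuniversal_independent.
Qed.

Lemma average_cmp (R : realFieldType) (n m s : nat) : 0 < n ->
  (((m%:R / n%:R : R) <= s%:R / n%:R)%R = (m <= s)) *
  ((s%:R / n%:R = m%:R / n%:R :> R)%R <-> s = m).
Proof.
move=> n_gt0; have n_pos : ((0 : R) < n%:R^-1)%R by rewrite invr_gt0 ltr0n.
split; first by rewrite ler_pM2r // ler_nat.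
split=> [/(mulIf (lt0r_neq0 n_pos))/eqP|->//]; by rewrite eqr_nat => /eqP.
Qed.

Lemma two_sub_ratio (R : numFieldType) (n k : nat) : 0 < n -> k <= 2 * n ->
  (2%:R - k%:R / n%:R = (2 * n - k)%:R / n%:R :> R)%R.
Proof.
move=> n_gt0 le_k2n; have n_neq0 : (n%:R != 0 :> R)%R by rewrite pnatr_eq0 -lt0n.
by rewrite natrB // natrM; field.
Qed.

Theorem proposition5p2 (T : finType) (e : rel T) :
  simple_graph e -> connected_graph e ->
  let n := #|T| in
  let k := matching_number e in
  (2 <= k)%N -> (k < n./2)%N ->
  ((2%:R - k%:R / n%:R <= sigma0 e :> rat)%R /\
   (sigma0 e = (2%:R - k%:R / n%:R)%R <-> isomorphic e (KjoinEmpty k n)))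
  /\
  ((Posz (4 * n) - Posz (3 * k) <= Posz (sigma1 e) :> int)%R /\
   (Posz (sigma1 e) = (Posz (4 * n) - Posz (3 * k))%R <-> isomorphic e (KjoinEmpty k n))).
Proof.
move=> e_simple _ n k k_ge2 k_lt_half.
have big_T : k.*2.+2 <= n by rewrite -doubleS -geq_half_double.
have T_gt1 : 1 < n by apply: leq_trans big_T; rewrite ltnS.
have n_gt0 : 0 < n by apply: ltnW.
set t := #|universal e|.
have t_le_k : t <= k := universal_card_le big_T.
have iso_iff := extremal_iff e_simple big_T (ltnW k_ge2).
have sum_ge p := sum_ecc_pow_ge e p T_gt1.
have univ_n0 : t = k -> universal e != set0.
  by move=> t_k; rewrite -card_gt0 -/t t_k ltnW.
have sum_eq p (t_k : t = k) := sum_ecc_pow_eq p e_simple.1 T_gt1 (univ_n0 t_k).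
have sigma0E : sigma0 e = ((\sum_(u : T) ecc e u ^ 1)%:R / n%:R)%R.
  by rewrite /sigma0; congr (_%:R / _)%R; apply: eq_bigr => u _; rewrite expn1.
have le_k2n : k <= 2 * n by move: big_T; rewrite -addnn; lia.
rewrite two_sub_ratio // sigma0E !average_cmp // iso_iff.
move: (sum_ge 1) (sum_ge 2) (sum_eq 1) (sum_eq 2); rewrite /sigma1 -/n -/t.
split; split; try split; lia.
Qed.
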